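(* Let $p$ be a propositional variable. The formula $\neg\Box\bot\to(\neg\neg\Box p\to\Box\neg\neg p)$ is derivable in $\mathsf{CK}\oplus\mathsf{N}_{\Diamond\Box}\oplus\mathsf{I}_{\Diamond\Box}$ but not in $\mathsf{CK}$.
   Context: Formulas: $\mathbf{L}$ is generated from a countably infinite set of propositional variables by $\varphi ::= p \mid \bot \mid \varphi\wedge\varphi \mid \varphi\vee\varphi \mid \varphi\to\varphi \mid \Box\varphi \mid \Diamond\varphi$; $\neg\varphi:=\varphi\to\bot$. Axioms: $\mathsf{K}_\Box$: $\Box(\varphi\to\psi)\to(\Box\varphi\to\Box\psi)$; $\mathsf{K}_\Diamond$: $\Box(\varphi\to\psi)\to(\Diamond\varphi\to\Diamond\psi)$; $\mathsf{N}_{\Diamond\Box}$: $\Diamond\bot\to\Box\bot$; $\mathsf{I}_{\Diamond\Box}$: $(\Diamond\varphi\to\Box\psi)\to\Box(\varphi\to\psi)$. For a set $\mathsf{Ax}$ of axioms, $\mathsf{CK}\oplus\mathsf{Ax}$ is the relation $\Gamma\vdash_{\mathsf{Ax}}\varphi$ inductively generated by: (Ax) $\Gamma\vdash\varphi$ whenever $\varphi$ is a substitution instance of an axiom of a standard Hilbert axiomatisation of intuitionistic propositional logic, of $\mathsf{K}_\Box$, of $\mathsf{K}_\Diamond$, or of an element of $\mathsf{Ax}$; (El) $\Gamma\vdash\varphi$ if $\varphi\in\Gamma$; (MP) from $\Gamma\vdash\varphi$ and $\Gamma\vdash\varphi\to\psi$ infer $\Gamma\vdash\psi$; (Nec) from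 $\emptyset\vdash\varphi$ infer $\Gamma\vdash\Box\varphi$. $\mathsf{CK}$ is the case $\mathsf{Ax}=\emptyset$. A formula is derivable in a logic if $\emptyset\vdash_{\mathsf{Ax}}\varphi$. *)

Inductive form : Type :=
| Var : nat -> form
| Bot : form
| And : form -> form -> form
| Or  : form -> form -> form
| Imp : form -> form -> form
| Box : form -> form
| Dia : form -> form.

Definition Neg (a : form) : form := Imp a Bot.

Fixpoint subst (s : nat -> form) (a : form) : form :=
  match a with
  | Var n => s n
  | Bot => Bot
  | And a b => And (subst s a) (subst s b)
  | Or a b => Or (subst s a) (subst s b)
  | Imp a b => Imp (subst s a) (subst s b)
  | Box a => Box (subst s a)
  | Dia a => Dia (subst s a)
  end.

Inductive IPC_ax : form -> Prop :=
| ipc_k  a b   : IPC_ax (Imp a (Imp b a))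
| ipc_s  a b c : IPC_ax (Imp (Imp a (Imp b c)) (Imp (Imp a b) (Imp a c)))
| ipc_a1 a b   : IPC_ax (Imp (And a b) a)
| ipc_a2 a b   : IPC_ax (Imp (And a b) b)
| ipc_a3 a b   : IPC_ax (Imp a (Imp b (And a b)))
| ipc_o1 a b   : IPC_ax (Imp a (Or a b))
| ipc_o2 a b   : IPC_ax (Imp b (Or a b))
| ipc_o3 a b c : IPC_ax (Imp (Imp a c) (Imp (Imp b c) (Imp (Or a b) c)))
| ipc_efq a    : IPC_ax (Imp Bot a).

Inductive K_ax : form -> Prop :=
| k_box a b : K_ax (Imp (Box (Imp a b)) (Imp (Box a) (Box b)))
| k_dia a b : K_ax (Imp (Box (Imp a b)) (Imp (Dia a) (Dia b))).

Definition N_DiaBox : form := Imp (Dia Bot) (Box Bot).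
Definition I_DiaBox : form :=
  Imp (Imp (Dia (Var 0)) (Box (Var 1))) (Box (Imp (Var 0) (Var 1))).

(* The relation Gamma |-_Ax phi of CK (+) Ax; Ax is a set of formulas,
   all of whose substitution instances are axioms. *)
Inductive deriv (Ax : form -> Prop) (G : form -> Prop) : form -> Prop :=
| d_ipc a : IPC_ax a -> deriv Ax G a
| d_k a : K_ax a -> deriv Ax G a
| d_ax s a : Ax a -> deriv Ax G (subst s a)
| d_el a : G a -> deriv Ax G a
| d_mp a b : deriv Ax G a -> deriv Ax G (Imp a b) -> deriv Ax G b
| d_nec a : deriv Ax (fun _ => False) a -> deriv Ax G (Box a).

Definition noAx : form -> Prop := fun _ => False.
Definition NI_ax : form -> Prop := fun a => a = N_DiaBox \/ a = I_DiaBox.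

Definition derivable (Ax : form -> Prop) (a : form) : Prop :=
  deriv Ax (fun _ => False) a.


(* Derivability: assume [~ Box Bot], [~ ~ Box p] and [Dia ~p].  From [Box p],
   necessitation and [K_Box] give [Box ~~p], and [K_Dia] turns [Dia ~p] into
   [Dia Bot], hence [Box Bot] by [N]: a contradiction.  So [~ Box p], which
   contradicts [~ ~ Box p]; thus [Dia ~p -> Box Bot], and [I] (with
   phi := ~p, psi := Bot) yields [Box ~~p].

   Underivability: the formula fails in a four-world birelational model for CK
   with r <= a, r R v, a R u and p true only at u.  Both r and a
   has an R-successor, so [~ Box Bot] holds at r; [Box p] holds at a, so
   [~ ~ Box p] holds at r; but v, an R-successor of r, does not force [~ ~ p]. *)

Definition ext (G : form -> Prop) (a : form) : form -> Prop := fun x => G x \/ x = a.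

Ltac hyp := apply d_el; cbv [ext]; tauto.

Section Hilbert.
Variable Ax : form -> Prop.

Lemma deriv_imp_const G a b : deriv Ax G b -> deriv Ax G (Imp a b).
Proof. intro Hb. apply (d_mp _ _ _ _ Hb), d_ipc, ipc_k. Qed.

Lemma deriv_imp_id G a : deriv Ax G (Imp a a).
Proof.
  eapply d_mp; [apply (d_ipc _ _ _ (ipc_k a a)) |].
  eapply d_mp; [apply (d_ipc _ _ _ (ipc_k a (Imp a a))) |].
  apply d_ipc, ipc_s.
Qed.

Lemma deduction_gen G' b : deriv Ax G' b ->
  forall G a, (forall x, G' x -> ext G a x) -> deriv Ax G (Imp a b).
Proof.
  induction 1 as [G' c Hc|G' c Hc|G' s c Hc|G' c Hc|G' c d Dc IHc Dcd IHcd|G' c Hc IHc];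
    intros G a HG.
  - apply deriv_imp_const, d_ipc, Hc.
  - apply deriv_imp_const, d_k, Hc.
  - apply deriv_imp_const, d_ax, Hc.
  - destruct (HG c Hc) as [Hin | ->].
    + apply deriv_imp_const, d_el, Hin.
    + apply deriv_imp_id.
  - eapply d_mp; [exact (IHc G a HG) |].
    eapply d_mp; [exact (IHcd G a HG) |].
    apply d_ipc, ipc_s.
  - apply deriv_imp_const, d_nec, Hc.
Qed.

Lemma deduction G a b : deriv Ax (ext G a) b -> deriv Ax G (Imp a b).
Proof. intro H. apply (deduction_gen _ _ H). auto. Qed.

Lemma deriv_Box_mp G a b :
  derivable Ax (Imp a b) -> deriv Ax G (Box a) -> deriv Ax G (Box b).
Proof.
  intros Hab Ha. apply (d_mp _ _ _ _ Ha).
  eapply d_mp; [apply d_nec, Hab | apply d_k, k_box].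
Qed.

Lemma deriv_Dia_mp G a b :
  deriv Ax G (Box (Imp a b)) -> deriv Ax G (Dia a) -> deriv Ax G (Dia b).
Proof.
  intros Hab Ha. apply (d_mp _ _ _ _ Ha).
  eapply d_mp; [exact Hab | apply d_k, k_dia].
Qed.

Lemma derivable_dni a : derivable Ax (Imp a (Neg (Neg a))).
Proof.
  apply deduction, deduction.
  eapply d_mp; hyp.
Qed.

Lemma deriv_Box_Dia_Neg G a :
  deriv Ax G (Box a) -> deriv Ax G (Dia (Neg a)) -> deriv Ax G (Dia Bot).
Proof.
  intros Ha Hna.
  apply (deriv_Dia_mp _ _ _ (deriv_Box_mp _ _ _ (derivable_dni a) Ha) Hna).
Qed.

Hypothesis Ax_N : Ax N_DiaBox.
Hypothesis Ax_I : Ax I_DiaBox.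

Lemma deriv_N G : deriv Ax G (Imp (Dia Bot) (Box Bot)).
Proof. exact (d_ax Ax G Var N_DiaBox Ax_N). Qed.

Lemma deriv_I G a b : deriv Ax G (Imp (Imp (Dia a) (Box b)) (Box (Imp a b))).
Proof.
  exact (d_ax Ax G (fun n => match n with 0 => a | _ => b end) I_DiaBox Ax_I).
Qed.

Lemma derivable_NI_Box_Neg_Neg p :
  derivable Ax (Imp (Neg (Box Bot))
                  (Imp (Neg (Neg (Box p))) (Box (Neg (Neg p))))).
Proof.
  apply deduction, deduction.
  eapply d_mp; [| apply deriv_I].
  apply deduction.
  eapply d_mp; [| apply d_ipc, ipc_efq].
  apply (d_mp _ _ (Neg (Box p))); [apply deduction | hyp].
  apply (d_mp _ _ (Box Bot)); [| hyp].
  eapply d_mp; [| apply deriv_N].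
  apply (deriv_Box_Dia_Neg _ p); hyp.
Qed.

End Hilbert.

(* Birelational semantics of CK without fallible worlds; soundness only needs
   this subclass of models. *)
Section Kripke.
Variables (W : Type) (le R : W -> W -> Prop) (val : nat -> W -> Prop).
Hypothesis le_refl : forall w, le w w.
Hypothesis le_trans : forall w1 w2 w3, le w1 w2 -> le w2 w3 -> le w1 w3.
Hypothesis val_mono : forall n w w', le w w' -> val n w -> val n w'.

Fixpoint forces (w : W) (f : form) : Prop :=
  match f with
  | Var n => val n w
  | Bot => False
  | And a b => forces w a /\ forces w b
  | Or a b => forces w a \/ forces w b
  | Imp a b => forall w', le w w' -> forces w' a -> forces w' b
  | Box a => forall w' v, le w w' -> R w' v -> forces v a
  | Dia a => forall w', le w w' -> exists v, R w' v /\ forces v a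
  end.

Definition valid (f : form) : Prop := forall w, forces w f.

Lemma forces_mono f w w' : le w w' -> forces w f -> forces w' f.
Proof.
  revert w w'; induction f; simpl; intros w w' Hle H.
  - exact (val_mono _ _ _ Hle H).
  - exact H.
  - destruct H; split; eauto.
  - destruct H; [left | right]; eauto.
  - intros w'' H' Ha. apply (H w''); eauto.
  - intros w'' v H' HR. apply (H w'' v); eauto.
  - intros w'' H'. apply H; eauto.
Qed.

Lemma valid_IPC_ax f : IPC_ax f -> valid f.
Proof.
  intros [a b|a b c|a b|a b|a b|a b|a b|a b c|a] w; simpl; intros w1 H1 H.
  - intros w2 H2 _. exact (forces_mono _ _ _ H2 H).
  - intros w2 H2 Hab w3 H3 Ha.
    apply (H w3 (le_trans _ _ _ H2 H3) Ha w3 (le_refl _)).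
    exact (Hab w3 H3 Ha).
  - apply H.
  - apply H.
  - intros w2 H2 Hb. split; [exact (forces_mono _ _ _ H2 H) | exact Hb].
  - left; exact H.
  - right; exact H.
  - intros w2 H2 Hbc w3 H3 [Ha | Hb].
    + exact (H w3 (le_trans _ _ _ H2 H3) Ha).
    + exact (Hbc w3 H3 Hb).
  - destruct H.
Qed.

Lemma valid_K_ax f : K_ax f -> valid f.
Proof.
  intros [a b|a b] w; simpl; intros w1 H1 Hab w2 H2 Ha.
  - intros w3 v H3 HR.
    apply (Hab w3 v (le_trans _ _ _ H2 H3) HR v (le_refl _)).
    exact (Ha w3 v H3 HR).
  - intros w3 H3. destruct (Ha w3 H3) as [v [HR Hv]].
    exists v. split; [exact HR |].
    exact (Hab w3 v (le_trans _ _ _ H2 H3) HR v (le_refl _) Hv).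
Qed.

Lemma soundness G f :
  deriv noAx G f -> (forall g, G g -> valid g) -> valid f.
Proof.
  induction 1 as [G' c Hc|G' c Hc|G' s c []|G' c Hc|G' c d Dc IHc Dcd IHcd|G' c Dc IHc];
    intros HG w.
  - exact (valid_IPC_ax _ Hc w).
  - exact (valid_K_ax _ Hc w).
  - exact (HG c Hc w).
  - exact (IHcd HG w w (le_refl _) (IHc HG w)).
  - intros w' v _ _. apply IHc. intros _ [].
Qed.

End Kripke.

Inductive world := wr | wa | wv | wu.

Definition world_le (w w' : world) : Prop := w = w' \/ (w = wr /\ w' = wa).

Definition world_R (w v : world) : Prop :=
  (w = wr /\ v = wv) \/ (w = wa /\ v = wu).

Definition world_val (_ : nat) (w : world) : Prop := w = wu.

Lemma world_le_refl w : world_le w w.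
Proof. left; reflexivity. Qed.

Lemma world_le_trans w1 w2 w3 :
  world_le w1 w2 -> world_le w2 w3 -> world_le w1 w3.
Proof.
  unfold world_le; intros [-> | [-> ->]] [-> | [-> ->]]; auto; discriminate.
Qed.

Lemma world_val_mono n w w' :
  world_le w w' -> world_val n w -> world_val n w'.
Proof. unfold world_val; intros [-> | [-> _]]; [auto | discriminate]. Qed.

Definition world_forces : world -> form -> Prop :=
  forces world world_le world_R world_val.

Lemma world_forces_derivable_CK f w : derivable noAx f -> world_forces w f.
Proof.
  intro H.
  exact (soundness world world_le world_R world_val world_le_refl
           world_le_trans world_val_mono _ _ H (fun _ no => match no with end) w).
Qed.

Lemma world_forces_wr_not_Box_Bot : world_forces wr (Neg (Box Bot)).
Proof.
  intros w' [<- | [_ ->]] Hbot.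
  - apply (Hbot wr wv); [apply world_le_refl | left; auto].
  - apply (Hbot wa wu); [apply world_le_refl | right; auto].
Qed.

Lemma world_forces_wa_Box_Var p : world_forces wa (Box (Var p)).
Proof. intros w' v [<- | [? _]] [[? _] | [_ ->]]; try discriminate; reflexivity. Qed.

Lemma world_forces_wr_Neg_Neg_Box_Var p : world_forces wr (Neg (Neg (Box (Var p)))).
Proof.
  intros w' Hle Hnot.
  apply (Hnot wa); [| apply world_forces_wa_Box_Var].
  destruct Hle as [<- | [_ ->]]; [right | left]; auto.
Qed.

Lemma not_world_forces_wv_Neg_Neg_Var p : ~ world_forces wv (Neg (Neg (Var p))).
Proof.
  intro Hnn. apply (Hnn wv (world_le_refl _)).
  intros w' [<- | [? _]] Hu; discriminate.
Qed.

Lemma not_derivable_CK_Box_Neg_Neg p :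
  ~ derivable noAx (Imp (Neg (Box Bot))
                      (Imp (Neg (Neg (Box (Var p)))) (Box (Neg (Neg (Var p)))))).
Proof.
  intro H. apply (not_world_forces_wv_Neg_Neg_Var p).
  exact (world_forces_derivable_CK _ wr H wr (world_le_refl _)
           world_forces_wr_not_Box_Bot wr (world_le_refl _)
           (world_forces_wr_Neg_Neg_Box_Var p) wr wv (world_le_refl _)
           (or_introl (conj eq_refl eq_refl))).
Qed.

Theorem mainTheorem17 : forall p : nat,
  let phi := Imp (Neg (Box Bot))
                 (Imp (Neg (Neg (Box (Var p)))) (Box (Neg (Neg (Var p))))) in
  derivable NI_ax phi /\ ~ derivable noAx phi.
Proof.
  intros p phi. split.
  - apply derivable_NI_Box_Neg_Neg; [left | right]; reflexivity.
  - apply not_derivable_CK_Box_Neg_Neg.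
Qed.
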